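(* Let $b>0$ and let $R>0$ be such that, for the functions \[ \begin{aligned} \underline u_{\rm out}(r) &= Lr^{-m} - br^{-l} \log \frac{r}{R},\\ \underline v_{\rm out}(r) &= m(n-2-m)Lr^{-m-2} +\Big[- l(n-2-l) \log \frac{r}{R} + (n-2-2l)\Big]br^{-l-2},\\ \underline w_{\rm out}(r) &= m(m+2)(n-2-m)(n-4-m)Lr^{-m-4} - l(l+2)(n-2-l)(n-4-l)br^{-l-4} \log \frac{r}{R} \\ &\qquad + (n-2-2l)(l+2)(n-4-l) b r^{-l-4}, \end{aligned} \] the numbers $\underline r_1 = \sup\{ r>0 : \underline u_{\rm out}(r) \leqslant 0 \}$, $\underline r_2 = \sup\{ r>0 : \underline v_{\rm out}(r) \leqslant 0 \}$, $\underline r_3 = \sup\{ r>0 : \underline w_{\rm out}(r) \leqslant 0 \}$ are well defined and satisfy $R<\underline r_1<\underline r_2<\underline r_3<+\infty$. Then \[ -\Delta \underline u_{\rm out} = \underline v_{\rm out} \ \text{ for all } r>0,\qquad -\Delta \underline v_{\rm out} = \underline w_{\rm out} \ \text{ for all } r>0,\qquad -\Delta \underline w_{\rm out} \leqslant \underline u_{\rm out}^p \ \text{ for all } r>\underline r_1 . \]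
   Context: Let $n\geqslant 15$ and $p=p_{\mathsf{JL}}(6,n)$, where $p_{\mathsf{JL}}(6,n)=\frac{(n+4)\sqrt{3} - \sqrt{\sqrt[3]{K_0+K_1}+ \sqrt[3]{K_0-K_1} + 3n^2+32 }}{(n-8)\sqrt{3} - \sqrt{\sqrt[3]{K_0+K_1} + \sqrt[3]{K_0-K_1} + 3n^2+32 }}$ with $2K_0 =-27n^6+324 n^5-756n^4-2592 n^3 + 25776 n^2 +5184 n -23744$, $2K_1 = \sqrt{(2K_0)^2 - 4(192n^2+256)^3}$. Let $m=6/(p-1)$, $L=\big(m(m+2)(m+4)(n-2-m)(n-4-m)(n-6-m)\big)^{1/(p-1)}$, let $\lambda_3$ be the smallest positive root of $P(\lambda)=(m+\lambda)(m+\lambda+2)(m+\lambda+4)(n-2-m-\lambda)(n-4-m-\lambda)(n-6-m-\lambda)-pL^{p-1}$, and set $l=m+\lambda_3$. For a function $f$ of $r=|x|$, $\Delta f$ denotes the Laplacian in $\mathbf R^n$ of $x\mapsto f(|x|)$, i.e. $f''+\frac{n-1}{r}f'$. *)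

From Stdlib Require Import Reals.
From Coquelicot Require Import Coquelicot.
Open Scope R_scope.

Definition cbrt (x : R) : R :=
  if Rlt_dec 0 x then Rpower x (1/3)
  else if Rlt_dec x 0 then - Rpower (- x) (1/3) else 0.

Definition K0 (n : R) : R :=
  (-27*n^6 + 324*n^5 - 756*n^4 - 2592*n^3 + 25776*n^2 + 5184*n - 23744) / 2.
Definition K1 (n : R) : R :=
  sqrt ((2 * K0 n)^2 - 4 * (192*n^2 + 256)^3) / 2.

Definition pJL6 (n : R) : R :=
  let S := sqrt (cbrt (K0 n + K1 n) + cbrt (K0 n - K1 n) + 3*n^2 + 32) in
  ((n + 4) * sqrt 3 - S) / ((n - 8) * sqrt 3 - S).

Definition mexp (n : R) : R := 6 / (pJL6 n - 1).

Definition Lconst (n : R) : R :=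
  let p := pJL6 n in let m := mexp n in
  Rpower (m*(m+2)*(m+4)*(n-2-m)*(n-4-m)*(n-6-m)) (1/(p-1)).

Definition Ppoly (n lam : R) : R :=
  let p := pJL6 n in let m := mexp n in
  (m+lam)*(m+lam+2)*(m+lam+4)*(n-2-m-lam)*(n-4-m-lam)*(n-6-m-lam)
  - p * Rpower (Lconst n) (p-1).

Definition smallest_pos_root (n lam : R) : Prop :=
  0 < lam /\ Ppoly n lam = 0 /\ (forall mu, 0 < mu < lam -> Ppoly n mu <> 0).

Definition radLap (n : R) (f : R -> R) (r : R) : R :=
  Derive (Derive f) r + (n - 1) / r * Derive f r.

Definition u_out (n b Rr l r : R) : R :=
  Lconst n * Rpower r (- mexp n) - b * Rpower r (- l) * ln (r / Rr).

Definition v_out (n b Rr l r : R) : R :=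
  let m := mexp n in
  m*(n-2-m)*Lconst n * Rpower r (-m-2)
  + (- l*(n-2-l) * ln (r / Rr) + (n-2-2*l)) * b * Rpower r (-l-2).

Definition w_out (n b Rr l r : R) : R :=
  let m := mexp n in
  m*(m+2)*(n-2-m)*(n-4-m)*Lconst n * Rpower r (-m-4)
  - l*(l+2)*(n-2-l)*(n-4-l)*b*Rpower r (-l-4) * ln (r / Rr)
  + (n-2-2*l)*(l+2)*(n-4-l)*b*Rpower r (-l-4).

Definition is_sup_nonpos (f : R -> R) (s : R) : Prop :=
  is_lub (fun r => 0 < r /\ f r <= 0) s.

From Stdlib Require Import Reals Lra Psatz FunctionalExtensionality.
From Coquelicot Require Import Coquelicot.
Open Scope R_scope.

(** By Cardano's formula, y = cbrt(K0 + K1) + cbrt(K0 - K1) is the real root of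
    y^3 - 3(192n^2 + 256)y - 2K0, and writing 12u^2 = y + 3n^2 + 32 one finds
    m = 6/(p-1) = (n-8)/2 - u.  For this m the Joseph-Lundgren identity
    p Q(m) = Qmax holds, where Q(x) = x(x+2)(x+4)(n-2-x)(n-4-x)(n-6-x) and
    Qmax = ((n-6)(n-2)(n+2)/8)^2: its defect is a multiple of the cubic at y.
    As L^(p-1) = Q(m), we get P(lam) = Q(m+lam) - Qmax, and Q is symmetric about
    (n-6)/2, where it attains its maximum Qmax; hence l = (n-6)/2.

    The radial Laplacian maps (A + B log(r/R)) r^-k to a function of the same
    form with exponent k+2, which gives the two identities (the second one needs
    l = (n-6)/2).  For the inequality, with Y = L r^-m, -Delta w is exactly the
    tangent Y^p + p Y^(p-1) (u - Y) of t |-> t^p at Y, which lies below u^p by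
    convexity as soon as u > 0, i.e. for r > r1. *)

Lemma cbrt_cube x : cbrt x ^ 3 = x.
Proof.
  assert (Hcube : forall y, 0 < y -> Rpower y (1/3) ^ 3 = y).
  { intros y Hy. rewrite <- Rpower_pow by apply exp_pos.
    rewrite Rpower_mult. replace (1/3 * INR 3) with 1 by (simpl; field).
    now apply Rpower_1. }
  unfold cbrt. destruct (Rlt_dec 0 x) as [Hx|Hx]; [now apply Hcube|].
  destruct (Rlt_dec x 0) as [Hx'|Hx'].
  - replace ((- Rpower (- x) (1/3)) ^ 3) with (- Rpower (- x) (1/3) ^ 3) by ring.
    rewrite Hcube by lra. ring.
  - replace x with 0 by lra. ring.
Qed.

Lemma pow3_eq_pos x c : 0 < c -> x ^ 3 = c ^ 3 -> x = c.
Proof.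
  intros Hc Hx.
  assert (Hfac : (x - c) * ((x + c / 2) ^ 2 + 3 / 4 * c ^ 2) = 0).
  { replace ((x - c) * ((x + c / 2) ^ 2 + 3 / 4 * c ^ 2)) with (x ^ 3 - c ^ 3) by field. lra. }
  apply Rmult_integral in Hfac as [Hfac|Hfac]; [lra|].
  pose proof (pow2_ge_0 (x + c / 2)). pose proof (pow_lt c 2 Hc). lra.
Qed.

Definition depressed_cubic (c k y : R) : R := y ^ 3 - 3 * c * y - 2 * k.

Lemma cardano_root c k d : 0 < c -> d ^ 2 = k ^ 2 - c ^ 3 ->
  depressed_cubic c k (cbrt (k + d) + cbrt (k - d)) = 0.
Proof.
  intros Hc Hd.
  set (A := cbrt (k + d)). set (B := cbrt (k - d)).
  assert (HA : A ^ 3 = k + d) by apply cbrt_cube.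
  assert (HB : B ^ 3 = k - d) by apply cbrt_cube.
  assert (HAB : A * B = c).
  { apply pow3_eq_pos; [exact Hc|].
    replace ((A * B) ^ 3) with (A ^ 3 * B ^ 3) by ring. rewrite HA, HB. nra. }
  unfold depressed_cubic.
  replace ((A + B) ^ 3) with (A ^ 3 + B ^ 3 + 3 * (A * B) * (A + B)) by ring.
  rewrite HA, HB, HAB. ring.
Qed.

Lemma depressed_cubic_sub c k y a :
  depressed_cubic c k y - depressed_cubic c k a = (y - a) * (y ^ 2 + y * a + a ^ 2 - 3 * c).
Proof. unfold depressed_cubic. ring. Qed.

Lemma depressed_cubic_root_gt c k y a : 4 * c < a ^ 2 ->
  depressed_cubic c k y = 0 -> depressed_cubic c k a < 0 -> a < y.
Proof.
  intros Ha Hy Hya. pose proof (depressed_cubic_sub c k y a) as Hfac.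
  pose proof (pow2_ge_0 (2 * y + a)). nra.
Qed.

Lemma depressed_cubic_root_lt c k y a : 4 * c < a ^ 2 ->
  depressed_cubic c k y = 0 -> 0 < depressed_cubic c k a -> y < a.
Proof.
  intros Ha Hy Hya. pose proof (depressed_cubic_sub c k y a) as Hfac.
  pose proof (pow2_ge_0 (2 * y + a)). nra.
Qed.

Definition cubic_c (N : R) : R := 192 * N ^ 2 + 256.

Definition cardano_y (N : R) : R := cbrt (K0 N + K1 N) + cbrt (K0 N - K1 N).

(* Polynomial inequalities for N >= 15 are proved by expanding in t = N - 15,
   where all coefficients have the same sign. *)
Ltac add_nonneg_powers t :=
  repeat match goal with
  | |- context [t ^ ?k] =>
      lazymatch goal with
      | _ : 0 <= t ^ k |- _ => fail
      | _ => assert (0 <= t ^ k) by (apply pow_le; assumption)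
      end
  end.

Lemma K1_sq N : 15 <= N -> K1 N ^ 2 = K0 N ^ 2 - cubic_c N ^ 3.
Proof.
  intros HN.
  assert (Hdisc : 0 <= (2 * K0 N) ^ 2 - 4 * cubic_c N ^ 3).
  { set (t := N - 15). assert (Ht : 0 <= t) by (unfold t; lra).
    assert (HNt : N = t + 15) by (unfold t; ring). clearbody t. subst N.
    replace ((2 * K0 (t + 15)) ^ 2 - 4 * cubic_c (t + 15) ^ 3) with
      (10214160759983817 + 10585461850409628*t + 4894534148604354*t^2
       + 1347076448060364*t^3 + 246965545626615*t^4 + 31863611628216*t^5
       + 2971699904988*t^6 + 202081266936*t^7 + 9951685191*t^8 + 346289580*t^9
       + 8084610*t^10 + 113724*t^11 + 729*t^12)
      by (unfold K0, cubic_c; field).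
    add_nonneg_powers t. lra. }
  unfold K1. unfold cubic_c in *.
  replace ((sqrt ((2 * K0 N) ^ 2 - 4 * (192 * N ^ 2 + 256) ^ 3) / 2) ^ 2)
    with (Rsqr (sqrt ((2 * K0 N) ^ 2 - 4 * (192 * N ^ 2 + 256) ^ 3)) / 4)
    by (unfold Rsqr; field).
  rewrite Rsqr_sqrt by exact Hdisc. field.
Qed.

Lemma cardano_y_root N : 15 <= N -> depressed_cubic (cubic_c N) (K0 N) (cardano_y N) = 0.
Proof.
  intros HN. apply cardano_root; [unfold cubic_c; nra | now apply K1_sq].
Qed.

(* The bounds are the values of y for which m = (N-8)/2 - u equals (N-8)/2 and 0. *)
Lemma cardano_y_bounds N : 15 <= N -> - 3 * N ^ 2 - 32 < cardano_y N < 160 - 48 * N.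
Proof.
  intros HN. pose proof (cardano_y_root N HN) as Hroot.
  set (t := N - 15). assert (Ht : 0 <= t) by (unfold t; lra).
  assert (HNt : N = t + 15) by (unfold t; ring). clearbody t. subst N.
  split.
  - apply (depressed_cubic_root_gt (cubic_c (t + 15)) (K0 (t + 15)));
      [unfold cubic_c; nra | exact Hroot |].
    replace (depressed_cubic (cubic_c (t + 15)) (K0 (t + 15)) (- 3 * (t + 15) ^ 2 - 32))
      with (- (158546808 + 58825764*t + 8645616*t^2 + 629208*t^3 + 22680*t^4 + 324*t^5))
      by (unfold depressed_cubic, cubic_c, K0; field).
    add_nonneg_powers t. lra.
  - apply (depressed_cubic_root_lt (cubic_c (t + 15)) (K0 (t + 15)));
      [unfold cubic_c; nra | exact Hroot |].
    replace (depressed_cubic (cubic_c (t + 15)) (K0 (t + 15)) (160 - 48 * (t + 15)))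
      with (66339 + 22959450*t + 7960869*t^2 + 1058508*t^3 + 67581*t^4 + 2106*t^5 + 27*t^6)
      by (unfold depressed_cubic, cubic_c, K0; field).
    add_nonneg_powers t. lra.
Qed.

Definition Qpoly (N x : R) : R := x * (x + 2) * (x + 4) * (N - 2 - x) * (N - 4 - x) * (N - 6 - x).

Definition Qmax (N : R) : R := ((N - 6) * (N - 2) * (N + 2) / 8) ^ 2.

Lemma Qpoly_pos N x : 0 < x < N - 6 -> 0 < Qpoly N x.
Proof. intros Hx. unfold Qpoly. repeat apply Rmult_lt_0_compat; lra. Qed.

Lemma Qpoly_center N : Qpoly N ((N - 6) / 2) = Qmax N.
Proof. unfold Qpoly, Qmax. field. Qed.

Lemma Qpoly_lt_Qmax N x : 6 < N -> 0 < x < (N - 6) / 2 -> Qpoly N x < Qmax N.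
Proof.
  intros HN Hx.
  set (d := (x - (N - 6) / 2) ^ 2).
  assert (Hd : 0 < d < ((N - 6) / 2) ^ 2) by (unfold d; split; nra).
  replace (Qpoly N x) with
    ((((N - 6) / 2) ^ 2 - d) * (((N - 2) / 2) ^ 2 - d) * (((N + 2) / 2) ^ 2 - d))
    by (unfold d, Qpoly; field).
  replace (Qmax N) with (((N - 6) / 2) ^ 2 * ((N - 2) / 2) ^ 2 * ((N + 2) / 2) ^ 2)
    by (unfold Qmax; field).
  assert (((N - 6) / 2) ^ 2 < ((N - 2) / 2) ^ 2) by nra.
  assert (((N - 2) / 2) ^ 2 < ((N + 2) / 2) ^ 2) by nra.
  apply Rmult_le_0_lt_compat; try lra.
  - apply Rmult_le_pos; lra.
  - apply Rmult_le_0_lt_compat; lra.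
Qed.

Lemma Qpoly_shift_cubic N u : let m := (N - 8) / 2 - u in
  (m + 6) * Qpoly N m
  = m * (Qmax N - depressed_cubic (cubic_c N) (K0 N) (12 * u ^ 2 - 3 * N ^ 2 - 32) / 1728).
Proof. unfold Qpoly, Qmax, depressed_cubic, cubic_c, K0. field. Qed.

Lemma pJL6_eq N : 15 <= N -> exists u, 0 < u < (N - 8) / 2 /\
  12 * u ^ 2 = cardano_y N + 3 * N ^ 2 + 32 /\ pJL6 N = 1 + 6 / ((N - 8) / 2 - u).
Proof.
  intros HN. pose proof (cardano_y_bounds N HN) as Hy.
  set (y := cardano_y N) in *.
  assert (Hp : pJL6 N = ((N + 4) * sqrt 3 - sqrt (y + 3 * N ^ 2 + 32))
                        / ((N - 8) * sqrt 3 - sqrt (y + 3 * N ^ 2 + 32))) by reflexivity.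
  assert (HS : Rsqr (sqrt (y + 3 * N ^ 2 + 32)) = y + 3 * N ^ 2 + 32)
    by (apply Rsqr_sqrt; lra).
  assert (HS3 : Rsqr (sqrt 3) = 3) by (apply Rsqr_sqrt; lra).
  assert (HSpos : 0 < sqrt (y + 3 * N ^ 2 + 32)) by (apply sqrt_lt_R0; lra).
  assert (HS3pos : 0 < sqrt 3) by (apply sqrt_lt_R0; lra).
  set (S := sqrt (y + 3 * N ^ 2 + 32)) in *. set (s3 := sqrt 3) in *.
  unfold Rsqr in HS, HS3. clearbody S s3.
  exists (S / (2 * s3)).
  set (u := S / (2 * s3)).
  assert (HSu : S = 2 * s3 * u) by (unfold u; field; lra). clearbody u. subst S.
  assert (Hu2 : 12 * u ^ 2 = y + 3 * N ^ 2 + 32).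
  { rewrite <- HS. replace 12 with (4 * (s3 * s3)) by (rewrite HS3; ring). ring. }
  assert (Hu : 0 < u) by nra.
  assert (Hlt : u < (N - 8) / 2) by nra.
  split; [lra | split; [exact Hu2 |]].
  rewrite Hp. field. split; nra.
Qed.

Lemma mexp_facts N : 15 <= N ->
  0 < mexp N < (N - 8) / 2 /\ pJL6 N = 1 + 6 / mexp N /\
  pJL6 N * Qpoly N (mexp N) = Qmax N.
Proof.
  intros HN. destruct (pJL6_eq N HN) as (u & Hu & Hu2 & Hp).
  assert (Hm : mexp N = (N - 8) / 2 - u).
  { unfold mexp. rewrite Hp. field. lra. }
  rewrite <- Hm in Hp. split; [lra | split; [exact Hp |]].
  pose proof (Qpoly_shift_cubic N u) as Hcubic. cbv zeta in Hcubic. rewrite <- Hm in Hcubic.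
  replace (12 * u ^ 2 - 3 * N ^ 2 - 32) with (cardano_y N) in Hcubic by lra.
  rewrite cardano_y_root in Hcubic by exact HN.
  rewrite Hp. apply (Rmult_eq_reg_l (mexp N)); [|lra].
  replace (mexp N * ((1 + 6 / mexp N) * Qpoly N (mexp N)))
    with ((mexp N + 6) * Qpoly N (mexp N)) by (field; lra).
  rewrite Hcubic. field.
Qed.

Lemma pJL6_gt_1 N : 15 <= N -> 1 < pJL6 N.
Proof.
  intros HN. destruct (mexp_facts N HN) as (Hm & Hp & _). rewrite Hp.
  pose proof (Rdiv_lt_0_compat 6 (mexp N) ltac:(lra) (proj1 Hm)). lra.
Qed.

Lemma Lconst_facts N : 15 <= N ->
  0 < Lconst N /\ Rpower (Lconst N) (pJL6 N - 1) = Qpoly N (mexp N).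
Proof.
  intros HN. destruct (mexp_facts N HN) as (Hm & _).
  pose proof (pJL6_gt_1 N HN) as Hp1.
  split; [apply exp_pos |].
  change (Rpower (Rpower (Qpoly N (mexp N)) (1 / (pJL6 N - 1))) (pJL6 N - 1)
          = Qpoly N (mexp N)).
  rewrite Rpower_mult. replace (1 / (pJL6 N - 1) * (pJL6 N - 1)) with 1 by (field; lra).
  apply Rpower_1, Qpoly_pos. lra.
Qed.

Lemma Ppoly_eq N lam : 15 <= N -> Ppoly N lam = Qpoly N (mexp N + lam) - Qmax N.
Proof.
  intros HN. destruct (mexp_facts N HN) as (_ & _ & HpQ).
  destruct (Lconst_facts N HN) as (_ & HL).
  unfold Ppoly, Qpoly. cbv zeta. rewrite HL, HpQ. ring.
Qed.

Lemma smallest_pos_root_eq N lam : 15 <= N -> smallest_pos_root N lam ->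
  mexp N + lam = (N - 6) / 2.
Proof.
  intros HN (Hlam & Hroot & Hmin). destruct (mexp_facts N HN) as (Hm & _).
  rewrite Ppoly_eq in Hroot by exact HN.
  destruct (Rtotal_order lam ((N - 6) / 2 - mexp N)) as [Hlt | [Heq | Hgt]].
  - pose proof (Qpoly_lt_Qmax N (mexp N + lam) ltac:(lra) ltac:(lra)). lra.
  - lra.
  - exfalso. apply (Hmin ((N - 6) / 2 - mexp N)); [lra |].
    rewrite Ppoly_eq by exact HN.
    replace (mexp N + ((N - 6) / 2 - mexp N)) with ((N - 6) / 2) by ring.
    rewrite Qpoly_center. ring.
Qed.

Lemma radLap_eq N f f1 f2 r : 0 < r ->
  (forall t, 0 < t -> is_derive f t (f1 t)) ->
  (forall t, 0 < t -> is_derive f1 t (f2 t)) ->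
  radLap N f r = f2 r + (N - 1) / r * f1 r.
Proof.
  intros Hr Hf Hf1. unfold radLap.
  rewrite (Derive_ext_loc (Derive f) f1).
  - now rewrite (is_derive_unique f1 r (f2 r) (Hf1 r Hr)),
                (is_derive_unique f r (f1 r) (Hf r Hr)).
  - apply (filter_imp (fun t => 0 < t)); [| exact (open_gt 0 r Hr)].
    intros t Ht. exact (is_derive_unique f t (f1 t) (Hf t Ht)).
Qed.

Definition powlog (A B k Rr r : R) : R := (A + B * ln (r / Rr)) * Rpower r (- k).

Lemma Rpower_opp_succ r k : 0 < r -> Rpower r (- k) = Rpower r (- (k + 1)) * r.
Proof.
  intros Hr. replace (- k) with (- (k + 1) + 1) by ring.
  now rewrite Rpower_plus, Rpower_1.
Qed.

Lemma is_derive_powlog A B k Rr r : 0 < Rr -> 0 < r ->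
  is_derive (powlog A B k Rr) r (powlog (B - k * A) (- k * B) (k + 1) Rr r).
Proof.
  intros HRr Hr. unfold powlog, Rpower. auto_derive.
  - repeat split; try apply Rdiv_lt_0_compat; assumption.
  - change (exp (- k * ln r)) with (Rpower r (- k)).
    change (exp (- (k + 1) * ln r)) with (Rpower r (- (k + 1))).
    rewrite (Rpower_opp_succ r k Hr). unfold Rdiv. field. split; lra.
Qed.

Lemma is_derive_powlog_sum A1 B1 k1 A2 B2 k2 Rr r : 0 < Rr -> 0 < r ->
  is_derive (fun t => powlog A1 B1 k1 Rr t + powlog A2 B2 k2 Rr t) r
    (powlog (B1 - k1 * A1) (- k1 * B1) (k1 + 1) Rr r
     + powlog (B2 - k2 * A2) (- k2 * B2) (k2 + 1) Rr r).
Proof.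
  intros HRr Hr.
  apply (is_derive_plus (powlog A1 B1 k1 Rr) (powlog A2 B2 k2 Rr)); now apply is_derive_powlog.
Qed.

Lemma opp_radLap_powlog_sum N A1 B1 k1 A2 B2 k2 Rr r : 0 < Rr -> 0 < r ->
  - radLap N (fun t => powlog A1 B1 k1 Rr t + powlog A2 B2 k2 Rr t) r =
  powlog (k1 * (N - 2 - k1) * A1 - (N - 2 - 2 * k1) * B1) (k1 * (N - 2 - k1) * B1) (k1 + 2) Rr r
  + powlog (k2 * (N - 2 - k2) * A2 - (N - 2 - 2 * k2) * B2) (k2 * (N - 2 - k2) * B2) (k2 + 2) Rr r.
Proof.
  intros HRr Hr.
  rewrite (radLap_eq N _ _ _ r Hr (fun t => is_derive_powlog_sum _ _ _ _ _ _ Rr t HRr)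
                                  (fun t => is_derive_powlog_sum _ _ _ _ _ _ Rr t HRr)).
  unfold powlog.
  rewrite (Rpower_opp_succ r (k1 + 1)), (Rpower_opp_succ r (k2 + 1)) by exact Hr.
  replace (k1 + 1 + 1) with (k1 + 2) by ring. replace (k2 + 1 + 1) with (k2 + 2) by ring.
  field. lra.
Qed.

Lemma u_out_powlog N b Rr l :
  u_out N b Rr l = fun r => powlog (Lconst N) 0 (mexp N) Rr r + powlog 0 (- b) l Rr r.
Proof. apply functional_extensionality. intros r. unfold u_out, powlog. ring. Qed.

Lemma v_out_powlog N b Rr l : let m := mexp N in
  v_out N b Rr l = fun r => powlog (m * (N - 2 - m) * Lconst N) 0 (m + 2) Rr r
                            + powlog ((N - 2 - 2 * l) * b) (- l * (N - 2 - l) * b) (l + 2) Rr r.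
Proof.
  apply functional_extensionality. intros r. unfold v_out, powlog.
  replace (- (mexp N + 2)) with (- mexp N - 2) by ring.
  replace (- (l + 2)) with (- l - 2) by ring. ring.
Qed.

Lemma w_out_powlog N b Rr l : let m := mexp N in
  w_out N b Rr l =
  fun r => powlog (m * (m + 2) * (N - 2 - m) * (N - 4 - m) * Lconst N) 0 (m + 4) Rr r
           + powlog ((N - 2 - 2 * l) * (l + 2) * (N - 4 - l) * b)
                    (- l * (l + 2) * (N - 2 - l) * (N - 4 - l) * b) (l + 4) Rr r.
Proof.
  apply functional_extensionality. intros r. unfold w_out, powlog.
  replace (- (mexp N + 4)) with (- mexp N - 4) by ring.
  replace (- (l + 4)) with (- l - 4) by ring. ring.
Qed.

Lemma opp_radLap_u_out N b Rr l r : 0 < Rr -> 0 < r ->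
  - radLap N (u_out N b Rr l) r = v_out N b Rr l r.
Proof.
  intros HRr Hr. rewrite u_out_powlog, opp_radLap_powlog_sum by assumption.
  rewrite v_out_powlog. unfold powlog. ring.
Qed.

Lemma opp_radLap_v_out N b Rr l r : l = (N - 6) / 2 -> 0 < Rr -> 0 < r ->
  - radLap N (v_out N b Rr l) r = w_out N b Rr l r.
Proof.
  intros Hl HRr Hr. rewrite v_out_powlog. cbv zeta.
  rewrite opp_radLap_powlog_sum by assumption.
  rewrite w_out_powlog. unfold powlog.
  replace (mexp N + 2 + 2) with (mexp N + 4) by ring. replace (l + 2 + 2) with (l + 4) by ring.
  subst l. field.
Qed.

Lemma opp_radLap_w_out N b Rr l r : l = (N - 6) / 2 -> 0 < Rr -> 0 < r ->
  - radLap N (w_out N b Rr l) r =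
  Qpoly N (mexp N) * Lconst N * Rpower r (- (mexp N + 6))
  - Qmax N * b * ln (r / Rr) * Rpower r (- (l + 6)).
Proof.
  intros Hl HRr Hr. rewrite w_out_powlog. cbv zeta.
  rewrite opp_radLap_powlog_sum by assumption. unfold powlog, Qpoly, Qmax.
  replace (mexp N + 4 + 2) with (mexp N + 6) by ring. replace (l + 4 + 2) with (l + 6) by ring.
  subst l. field.
Qed.

Lemma exp_mul_ge p a : 1 <= p -> 1 + p * (exp a - 1) <= exp (p * a).
Proof.
  intros Hp.
  assert (Hsplit : exp (p * a) = exp a * exp ((p - 1) * a))
    by (rewrite <- exp_plus; f_equal; ring).
  assert (Hpa : 1 + (p - 1) * a <= exp ((p - 1) * a)) by apply exp_ineq1_le.
  assert (Hna : 1 - a <= exp (- a)) by (pose proof (exp_ineq1_le (- a)); lra).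
  assert (Hinv : exp (- a) * exp a = 1)
    by (rewrite <- exp_plus, <- exp_0; f_equal; ring).
  assert (Hea : 0 < exp a) by apply exp_pos.
  assert (Hchord : exp a - 1 <= a * exp a) by nra.
  rewrite Hsplit.
  assert (exp a * (1 + (p - 1) * a) <= exp a * exp ((p - 1) * a))
    by (apply Rmult_le_compat_l; lra).
  nra.
Qed.

Lemma Rpower_tangent_le X Y p : 0 < X -> 0 < Y -> 1 <= p ->
  Rpower Y p + p * Rpower Y (p - 1) * (X - Y) <= Rpower X p.
Proof.
  intros HX HY Hp.
  replace X with (Y * (X / Y)) by (field; lra).
  assert (Hz : 0 < X / Y) by (apply Rdiv_lt_0_compat; assumption).
  set (z := X / Y) in *. clearbody z.
  rewrite <- Rpower_mult_distr by assumption.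
  replace (p - 1) with (p + - (1)) by ring.
  rewrite Rpower_plus, Rpower_Ropp, Rpower_1 by assumption.
  replace (Rpower Y p + p * (Rpower Y p * / Y) * (Y * z - Y))
    with (Rpower Y p * (1 + p * (z - 1))) by (field; lra).
  apply Rmult_le_compat_l; [apply Rlt_le, exp_pos |].
  pose proof (exp_mul_ge p (ln z) Hp) as Hexp. rewrite exp_ln in Hexp by assumption.
  exact Hexp.
Qed.

Lemma u_out_linearization N b Rr l r : 15 <= N -> 0 < r ->
  let p := pJL6 N in let Y := Lconst N * Rpower r (- mexp N) in
  Rpower Y p + p * Rpower Y (p - 1) * (u_out N b Rr l r - Y) =
  Qpoly N (mexp N) * Lconst N * Rpower r (- (mexp N + 6))
  - Qmax N * b * ln (r / Rr) * Rpower r (- (l + 6)).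
Proof.
  intros HN Hr p Y.
  destruct (mexp_facts N HN) as (Hm & Hp & HpQ). destruct (Lconst_facts N HN) as (HL & HLp).
  fold p in Hp, HpQ, HLp. set (m := mexp N) in *. set (L := Lconst N) in *.
  assert (Hrm : 0 < Rpower r (- m)) by apply exp_pos.
  assert (HYp1 : Rpower Y (p - 1) = Qpoly N m * Rpower r (- 6)).
  { unfold Y. rewrite <- Rpower_mult_distr, Rpower_mult, HLp by assumption.
    replace (- m * (p - 1)) with (- 6) by (rewrite Hp; field; lra). reflexivity. }
  assert (HYp : Rpower Y p = Y * Rpower Y (p - 1)).
  { replace p with (1 + (p - 1)) at 1 by ring.
    rewrite Rpower_plus, Rpower_1 by (apply Rmult_lt_0_compat; assumption). reflexivity. }
  assert (Hshift : Rpower r (- 6) * Rpower r (- m) = Rpower r (- (m + 6))).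
  { rewrite <- Rpower_plus. f_equal. ring. }
  assert (Hshift' : Rpower r (- 6) * Rpower r (- l) = Rpower r (- (l + 6))).
  { rewrite <- Rpower_plus. f_equal. ring. }
  rewrite HYp, HYp1, <- Hshift, <- Hshift', <- HpQ. unfold Y, u_out. fold m L. ring.
Qed.

Theorem lemma4p2 (n : nat) (lam3 b Rr r1 r2 r3 : R) :
  (15 <= n)%nat ->
  smallest_pos_root (INR n) lam3 ->
  let l := mexp (INR n) + lam3 in
  0 < b -> 0 < Rr ->
  is_sup_nonpos (u_out (INR n) b Rr l) r1 ->
  is_sup_nonpos (v_out (INR n) b Rr l) r2 ->
  is_sup_nonpos (w_out (INR n) b Rr l) r3 ->
  Rr < r1 -> r1 < r2 -> r2 < r3 ->
  (forall r, 0 < r -> - radLap (INR n) (u_out (INR n) b Rr l) r = v_out (INR n) b Rr l r) /\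
  (forall r, 0 < r -> - radLap (INR n) (v_out (INR n) b Rr l) r = w_out (INR n) b Rr l r) /\
  (forall r, r1 < r -> - radLap (INR n) (w_out (INR n) b Rr l) r
                       <= Rpower (u_out (INR n) b Rr l r) (pJL6 (INR n))).
Proof.
  intros Hn Hroot l _ HRr [Hr1_ub _] _ _ HRr1 _ _.
  assert (HN : 15 <= INR n) by (apply le_INR in Hn; simpl in Hn; lra).
  assert (Hl : l = (INR n - 6) / 2) by (apply smallest_pos_root_eq; assumption).
  split; [| split]; intros r Hr.
  - now apply opp_radLap_u_out.
  - now apply opp_radLap_v_out.
  - assert (Hr0 : 0 < r) by lra.
    assert (Hu : 0 < u_out (INR n) b Rr l r).
    { apply Rnot_le_lt. intros Hle. pose proof (Hr1_ub r (conj Hr0 Hle)). lra. }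
    destruct (Lconst_facts (INR n) HN) as (HL & _).
    rewrite opp_radLap_w_out, <- (u_out_linearization _ b Rr l r) by assumption.
    apply Rpower_tangent_le; [exact Hu | apply Rmult_lt_0_compat; [exact HL | apply exp_pos] |].
    apply Rlt_le, pJL6_gt_1, HN.
Qed.
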